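(* Let $K$ be a positive definite field and $E$ the graph with two vertices $v,w$ and countably infinitely many edges $e_1,e_2,\dots$ from $v$ to $w$. Then $L_K(E)$ is a Rickart $*$-ring but is not Baer (indeed not graded Baer).
   Context: $L_K(E)$: free $K$-algebra on $\{v,w,e_n,e_n^*\}$ modulo $v^2=v$, $w^2=w$, $vw=wv=0$; $ve_n=e_nw=e_n$; $we_n^*=e_n^*v=e_n^*$; $e_m^*e_n=\delta_{m,n}w$ (no relation at $v$ since $v$ emits infinitely many edges). It is unital with identity $v+w$, $\mathbb Z$-graded by $\deg e_n=1$, $\deg e_n^*=-1$, with involution induced by that of $K$ via $(kpq^* )^*=k^*qp^*$. $K$ positive definite: $\sum k_ik_i^*=0\Rightarrow$ all $k_i=0$. Rickart $*$-ring: right annihilator of every element generated by a projection ($p=p^2=p^*$). Baer: right annihilator of every subset generated by an idempotent; graded Baer: right annihilator of every set of homogeneous elements generated by a homogeneous idempotent. *)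

From HB Require Import structures.
From mathcomp Require Import all_boot all_order all_algebra.
From Stdlib Require Import ClassicalEpsilon.
Set Implicit Arguments. Unset Strict Implicit. Unset Printing Implicit Defensive.
Import GRing.Theory.
Local Open Scope ring_scope.

(* The Leavitt path algebra L_K(E) of the graph E with two vertices v, w and *)
(* countably many edges e_0, e_1, ... from v to w.                           *)
(* Since v emits infinitely many edges there is no (CK2) relation, and the   *)
(* standard basis of L_K(E) consists of the reduced monomials p q^* with     *)
(* r(p) = r(q):                                                              *)
(*     v,  w,  e_n,  e_n^*,  e_m e_n^*        (m, n : nat).                   *)
(* An element is a finitely supported K-combination of these; we store the   *)
(* coefficients separately:  cv (of v), cw (of w), ce n (of e_n),             *)
(* cs n (of e_n^* ), cm m n (of e_m e_n^* ).  The product below is the         *)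
(* bilinear extension of the multiplication table of these monomials, which  *)
(* is forced by the defining relations v^2=v, w^2=w, vw=wv=0, v e_n = e_n w  *)
(* = e_n, w e_n^* = e_n^* v = e_n^*, e_m^* e_n = delta_{mn} w:                *)
(*   v.v=v, v.e_n=e_n, v.(e_m e_n^* )=e_m e_n^*, w.w=w, w.e_n^*=e_n^*,         *)
(*   e_m.w=e_m, e_m.e_n^*=e_m e_n^*, e_m^*.v=e_m^*, e_m^*.e_n=delta w,         *)
(*   e_k^*.(e_k e_n^* )=e_n^*, (e_i e_j^* ).v=e_i e_j^*,                       *)
(*   (e_i e_j^* ).e_j=e_i, (e_i e_j^* ).(e_j e_l^* )=e_i e_l^*,                 *)
(* all other products of basis monomials being 0.                            *)

Section LPA.
Variable K : fieldType.

Definition fin_supp (f : nat -> K) : Prop :=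
  exists N, forall i, (N <= i)%N -> f i = 0.

Definition fsum (f : nat -> K) : K :=
  match excluded_middle_informative (fin_supp f) with
  | left H => \sum_(i < proj1_sig (constructive_indefinite_description _ H)) f i
  | right _ => 0
  end.

Lemma fsum0 (f : nat -> K) : (forall i, f i = 0) -> fsum f = 0.
Proof.
move=> H; rewrite /fsum; case: excluded_middle_informative => // Hf.
by apply: big1 => i _; apply: H.
Qed.

Record LK := MkLK {
  cv : K; cw : K;
  ce : nat -> K; cs : nat -> K; cm : nat -> nat -> K;
  cfin : exists N, forall i j, (N <= i)%N ->
           [/\ ce i = 0, cs i = 0, cm i j = 0 & cm j i = 0] }.

Definition mulv (x y : LK) : K := cv x * cv y.
Definition mulw (x y : LK) : K := cw x * cw y + fsum (fun n => cs x n * ce y n).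
Definition mule (x y : LK) (i : nat) : K :=
  cv x * ce y i + ce x i * cw y + fsum (fun j => cm x i j * ce y j).
Definition muls (x y : LK) (n : nat) : K :=
  cw x * cs y n + cs x n * cv y + fsum (fun k => cs x k * cm y k n).
Definition mulm (x y : LK) (i l : nat) : K :=
  cv x * cm y i l + ce x i * cs y l + cm x i l * cv y
  + fsum (fun j => cm x i j * cm y j l).

Lemma mul_fin (x y : LK) : exists N, forall i j, (N <= i)%N ->
  [/\ mule x y i = 0, muls x y i = 0, mulm x y i j = 0 & mulm x y j i = 0].
Proof.
case: (cfin x) => Nx Hx; case: (cfin y) => Ny Hy.
exists (maxn Nx Ny) => i j Hi.
have Hxi : (Nx <= i)%N by apply: leq_trans Hi; apply: leq_maxl.
have Hyi : (Ny <= i)%N by apply: leq_trans Hi; apply: leq_maxr.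
case: (Hx i j Hxi) => exi sxi mxij mxji.
case: (Hy i j Hyi) => eyi syi myij myji.
split.
- have F : fsum (fun k => cm x i k * ce y k) = 0.
    by apply: fsum0 => k; case: (Hx i k Hxi) => _ _ -> _; rewrite mul0r.
  by rewrite /mule F eyi exi mulr0 mul0r !addr0.
- have F : fsum (fun k => cs x k * cm y k i) = 0.
    by apply: fsum0 => k; case: (Hy i k Hyi) => _ _ _ ->; rewrite mulr0.
  by rewrite /muls F syi sxi mulr0 mul0r !addr0.
- have F : fsum (fun k => cm x i k * cm y k j) = 0.
    by apply: fsum0 => k; case: (Hx i k Hxi) => _ _ -> _; rewrite mul0r.
  by rewrite /mulm F myij exi mxij mulr0 !mul0r !addr0.
- have F : fsum (fun k => cm x j k * cm y k i) = 0.
    by apply: fsum0 => k; case: (Hy i k Hyi) => _ _ _ ->; rewrite mulr0.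
  by rewrite /mulm F myji syi mxji !mulr0 mul0r !addr0.
Qed.

Definition Lmul (x y : LK) : LK :=
  @MkLK (mulv x y) (mulw x y) (mule x y) (muls x y) (mulm x y) (mul_fin x y).

Lemma zero_fin : exists N : nat, forall i j : nat, (N <= i)%N ->
  [/\ (fun _ : nat => 0 : K) i = 0, (fun _ : nat => 0 : K) i = 0,
      (fun _ _ : nat => 0 : K) i j = 0 & (fun _ _ : nat => 0 : K) j i = 0].
Proof. by exists 0%N. Qed.

Definition Lzero : LK :=
  @MkLK 0 0 (fun _ => 0) (fun _ => 0) (fun _ _ => 0) zero_fin.

(* the involution of L_K(E), induced by an involution conj of K:
   (k p q^* )^* = conj(k) q p^*.  So v^*=v, w^*=w, (e_n)^* = e_n^*,
   (e_n^* )^* = e_n, (e_m e_n^* )^* = e_n e_m^*. *)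
Variable conj : {rmorphism K -> K}.

Lemma star_fin (x : LK) : exists N, forall i j, (N <= i)%N ->
  [/\ conj (cs x i) = 0, conj (ce x i) = 0,
      conj (cm x j i) = 0 & conj (cm x i j) = 0].
Proof.
case: (cfin x) => N HN; exists N => i j Hi.
by case: (HN i j Hi) => -> -> -> ->; rewrite rmorph0.
Qed.

Definition Lstar (x : LK) : LK :=
  @MkLK (conj (cv x)) (conj (cw x)) (fun i => conj (cs x i))
       (fun i => conj (ce x i)) (fun i j => conj (cm x j i)) (star_fin x).

Inductive basis := Bv | Bw | Be of nat | Bs of nat | Bm of nat & nat.

Definition coef (x : LK) (b : basis) : K :=
  match b with
  | Bv => cv x | Bw => cw x | Be n => ce x n | Bs n => cs x n | Bm m n => cm x m n
  end.

Definition bdeg (b : basis) : int :=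
  match b with
  | Bv | Bw | Bm _ _ => 0 | Be _ => 1 | Bs _ => -1
  end.

Definition homogeneous (x : LK) : Prop :=
  exists d : int, forall b, coef x b != 0 -> bdeg b = d.

Definition rann_is (S : LK -> Prop) (e : LK) : Prop :=
  forall y, (forall s, S s -> Lmul s y = Lzero) <-> exists z, y = Lmul e z.

Definition Rickart_star : Prop :=
  forall x : LK, exists p : LK,
    [/\ Lmul p p = p, Lstar p = p & rann_is (fun s => s = x) p].

End LPA.

Definition Baer (K : fieldType) : Prop :=
  forall S : LK K -> Prop, exists e : LK K, Lmul e e = e /\ rann_is S e.

Definition graded_Baer (K : fieldType) : Prop :=
  forall S : LK K -> Prop, (forall s, S s -> homogeneous s) ->
    exists e : LK K, [/\ homogeneous e, Lmul e e = e & rann_is S e].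

Definition positive_definite (K : fieldType) (conj : {rmorphism K -> K}) : Prop :=
  forall s : seq K, \sum_(k <- s) k * conj k = 0 -> all (fun k => k == 0) s.

From mathcomp Require Import all_boot all_order all_algebra ring.
From Stdlib Require Import FunctionalExtensionality ProofIrrelevance ClassicalEpsilon.
Set Implicit Arguments. Unset Strict Implicit. Unset Printing Implicit Defensive.
Import GRing.Theory.
Local Open Scope ring_scope.

(* An element of L_K(E) only involves the edges e_i with i < N for some N,
   and the span of these monomials is K x M_(N+1)(K), compatibly with the
   product and the involution.  Over a positive definite field a Gram matrix
   R R^* of a row-free R is invertible, so a square matrix A has the
   orthogonal projection P = 1 - R^* (R R^* )^-1 R onto its kernel, R a basis
   of the row space of A; then A P = 0 and P + T A = 1 for some T.  Lifting
   P (and the analogous projection in K) back to p and T to t gives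
   x p = 0 and p + t x = 1, whence rann(x) = p L_K(E).

   Baer fails for S = {e_(2n)^*}: if an idempotent e, supported on the
   indices below N, generated rann(S), then e_(2N)^* e = 0 forces e to have
   no v-component, so no e z has a component along e_k e_k^* for k >= N;
   yet e_k e_k^* lies in rann(S) for every odd k.  S is homogeneous, so
   L_K(E) is not even graded Baer. *)

Section ConjugateTranspose.
Variables (K : fieldType) (conj : {rmorphism K -> K}).
Hypotheses (conjK : involutive conj) (conj_pd : positive_definite conj).

Definition adj m n (X : 'M[K]_(m, n)) : 'M[K]_(n, m) := (map_mx conj X)^T.

Lemma adjM m n p (X : 'M[K]_(m, n)) (Y : 'M[K]_(n, p)) :
  adj (X *m Y) = adj Y *m adj X.
Proof. by rewrite /adj map_mxM trmx_mul. Qed.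

Lemma adjK m n (X : 'M[K]_(m, n)) : adj (adj X) = X.
Proof. by apply/matrixP => i j; rewrite !mxE conjK. Qed.

Lemma adjB n (X Y : 'M[K]_n) : adj (X - Y) = adj X - adj Y.
Proof. by rewrite /adj map_mxB linearB. Qed.

Lemma adj1 n : adj (1%:M : 'M[K]_n) = 1%:M.
Proof. by rewrite /adj map_mx1 trmx1. Qed.

Lemma adj_inv n (G : 'M[K]_n) : adj (invmx G) = invmx (adj G).
Proof. by rewrite /adj map_invmx trmx_inv. Qed.

Lemma mulmx_adj_eq0 m n (X : 'M[K]_(m, n)) : X *m adj X = 0 -> X = 0.
Proof.
move=> XX0; apply/matrixP => i j; rewrite mxE.
have /allP/(_ (X i j)) : all (fun k => k == 0) [seq X i k | k <- enum 'I_n].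
  apply: conj_pd; rewrite big_map big_enum /=.
  have := congr1 (fun M : 'M_m => M i i) XX0; rewrite !mxE => sum0.
  by rewrite -[RHS]sum0; apply: eq_bigr => k _; rewrite !mxE.
by move/(_ (map_f _ (mem_enum _ j)))/eqP.
Qed.

Lemma gram_unitmx m n (R : 'M[K]_(m, n)) : row_free R -> R *m adj R \in unitmx.
Proof.
move=> freeR; rewrite -row_free_unit -kermx_eq0; apply/eqP.
set U := kermx _.
have UR0 : U *m R = 0.
  apply: mulmx_adj_eq0; rewrite adjM mulmxA -(mulmxA U).
  by rewrite mulmx_ker mul0mx.
by apply/eqP; rewrite -(mulmx_free_eq0 _ freeR) UR0.
Qed.

Lemma row_free_projection m n (R : 'M[K]_(m, n)) : row_free R ->
  exists2 Q : 'M[K]_n, [/\ Q *m Q = Q, adj Q = Q & R *m Q = R] & (Q <= R)%MS.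
Proof.
move=> /gram_unitmx G_unit; set H := adj R *m invmx (R *m adj R).
have RH : R *m H = 1%:M by rewrite mulmxA mulmxV.
exists (H *m R); last exact: submxMl.
split.
- by rewrite mulmxA -(mulmxA H) RH mulmx1.
- by rewrite !adjM adj_inv adjM !adjK mulmxA.
- by rewrite mulmxA RH mul1mx.
Qed.

Lemma rowspace_projection n (A : 'M[K]_n) : exists2 Q : 'M[K]_n,
  [/\ Q *m Q = Q, adj Q = Q & A *m Q = A] & (Q <= A)%MS.
Proof.
have [Q [QQ adjQ RQ] QR] := row_free_projection (row_base_free A).
exists Q; last by rewrite (submx_trans QR) ?eq_row_base.
split=> //; have /submxP[D ->] : (A <= row_base A)%MS by rewrite eq_row_base.
by rewrite -mulmxA RQ.
Qed.

Lemma kernel_projection n (A : 'M[K]_n) : exists P T : 'M[K]_n,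
  [/\ P *m P = P, adj P = P, A *m P = 0 & P + T *m A = 1%:M].
Proof.
have [Q [QQ adjQ AQ] /submxP[T QTA]] := rowspace_projection A.
exists (1%:M - Q), T; split.
- by rewrite mulmxBl mul1mx mulmxBr mulmx1 QQ subrr subr0.
- by rewrite adjB adj1 adjQ.
- by rewrite mulmxBr mulmx1 AQ subrr.
- by rewrite -QTA subrK.
Qed.

End ConjugateTranspose.

Section Truncation.
Variable K : fieldType.
Implicit Types (x y z : LK K) (N : nat).

Lemma LK_ext x y : cv x = cv y -> cw x = cw y -> ce x =1 ce y -> cs x =1 cs y ->
  (forall i j, cm x i j = cm y i j) -> x = y.
Proof.
case: x => a b e s m f; case: y => a' b' e' s' m' f' /= -> -> He Hs Hm.
move: (functional_extensionality _ _ He) (functional_extensionality _ _ Hs) f f'.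
have -> : m = m'.
  by apply: functional_extensionality => i; apply: functional_extensionality.
by move=> -> -> f f'; rewrite (proof_irrelevance _ f f').
Qed.

Definition bounded N x := forall i j, (N <= i)%N ->
  [/\ ce x i = 0, cs x i = 0, cm x i j = 0 & cm x j i = 0].

Lemma bounded_le N M x : (N <= M)%N -> bounded N x -> bounded M x.
Proof. by move=> NM bx i j Mi; apply: bx; apply: leq_trans Mi. Qed.

Lemma bounded_exists x : exists N, bounded N x.
Proof. exact: cfin. Qed.

Lemma bounded_exists3 x y z : exists N, [/\ bounded N x, bounded N y & bounded N z].
Proof.
case: (bounded_exists x) (bounded_exists y) (bounded_exists z).
move=> Nx bx [Ny b_y] [Nz bz].
exists (maxn Nx (maxn Ny Nz)).
by split; [apply: bounded_le bx | apply: bounded_le b_y | apply: bounded_le bz];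
  rewrite !leq_max leqnn ?orbT.
Qed.

Lemma sum_ord_vanish (f : nat -> K) N M : (forall i, (N <= i)%N -> f i = 0) ->
  (N <= M)%N -> \sum_(i < M) f i = \sum_(i < N) f i.
Proof.
move=> f0 NM; rewrite (big_ord_widen M f NM) [RHS]big_mkcond /=.
by apply: eq_bigr => i _; case: ltnP => // /f0.
Qed.

Lemma fsumE (f : nat -> K) N : (forall i, (N <= i)%N -> f i = 0) ->
  fsum f = \sum_(i < N) f i.
Proof.
move=> f0; rewrite /fsum.
case: excluded_middle_informative => [?|[]]; last by exists N.
case: constructive_indefinite_description => M f0' /=.
by rewrite -(@sum_ord_vanish f M (maxn N M)) ?(@sum_ord_vanish f N) ?leq_maxl ?leq_maxr.
Qed.

Lemma bounded_mul N x y : bounded N x -> bounded N y -> bounded N (Lmul x y).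
Proof.
move=> bx b_y i j Ni.
have [exi sxi mxij mxji] := bx i j Ni; have [eyi syi myij myji] := b_y i j Ni.
have cmx0 k : cm x i k = 0 by case: (bx i k Ni).
have cmy0 k : cm y k i = 0 by case: (b_y i k Ni).
by split; rewrite /= ?/mule ?/muls ?/mulm fsum0 => [|k];
  rewrite ?exi ?eyi ?sxi ?syi ?mxij ?myij ?mxji ?myji ?cmx0 ?cmy0
          ?(mul0r, mulr0, addr0).
Qed.

(* The span of the monomials with indices below N is K x M_(N+1)(K): index 0
   stands for w and index i+1 for e_i, so that w, e_i, e_j^*, e_i e_j^* are
   matrix units, while v - \sum_(i < N) e_i e_i^* spans the factor K.  Hence
   the coefficient of v reappears on the diagonal. *)
Definition entry x (i j : nat) : K :=
  match i, j with
  | 0, 0 => cw x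
  | i.+1, 0 => ce x i
  | 0, j.+1 => cs x j
  | i.+1, j.+1 => cm x i j + (i == j)%:R * cv x
  end.

Definition mat N x : 'M[K]_N.+1 := \matrix_(i, j) entry x i j.

Lemma sum_deltal N i (a : K) (F : nat -> K) : (i < N)%N ->
  \sum_(k < N) (i == k)%:R * a * F k = a * F i.
Proof.
move=> ltiN; rewrite (bigD1 (Ordinal ltiN)) //= eqxx mul1r big1 ?addr0 // => k.
by rewrite -val_eqE eq_sym => /negbTE /= ->; rewrite !mul0r.
Qed.

Lemma sum_deltar N j (b : K) (F : nat -> K) : (j < N)%N ->
  \sum_(k < N) F k * ((k == j :> nat)%:R * b) = F j * b.
Proof.
move=> ltjN; rewrite (bigD1 (Ordinal ltjN)) //= eqxx mul1r big1 ?addr0 // => k.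
by rewrite -val_eqE => /negbTE /= ->; rewrite !mul0r mulr0.
Qed.

Lemma mat_mul N x y : bounded N x -> bounded N y ->
  mat N (Lmul x y) = mat N x *m mat N y.
Proof.
move=> bx b_y; apply/matrixP => -[[|i] ltiN] [[|j] ltjN];
  rewrite !mxE big_ord_recl !mxE /=;
  under eq_bigr => k _ do rewrite !mxE lift0 /=.
- rewrite /mulw (@fsumE _ N) // => k Nk.
  by case: (bx k 0%N Nk) => _ -> _ _; rewrite mul0r.
- rewrite /muls (@fsumE _ N); last first.
    by move=> k Nk; case: (bx k 0%N Nk) => _ -> _ _; rewrite mul0r.
  under eq_bigr => k _ do rewrite mulrDr.
  rewrite big_split /= sum_deltar //; ring.
- rewrite /mule (@fsumE _ N); last first.
    by move=> k Nk; case: (b_y k 0%N Nk) => -> _ _ _; rewrite mulr0.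
  under eq_bigr => k _ do rewrite mulrDl.
  rewrite big_split /= sum_deltal //; ring.
- rewrite /mulm (@fsumE _ N); last first.
    by move=> k Nk; case: (b_y k j Nk) => _ _ -> _; rewrite mulr0.
  under eq_bigr => k _ do rewrite mulrDl !mulrDr.
  rewrite !big_split /= sum_deltar // (@sum_deltal N i (cv x) (cm y ^~ j)) //.
  rewrite (@sum_deltal N i (cv x) (fun k => (k == j)%:R * cv y)) // /mulv.
  set d := ((i == j)%:R : K); set S := \sum_(k < N) _; ring.
Qed.

Lemma mat_inj N x y : bounded N x -> bounded N y -> cv x = cv y ->
  mat N x = mat N y -> x = y.
Proof.
move=> bx b_y eq_v /matrixP eq_mat.
have entryE i j : (i < N.+1)%N -> (j < N.+1)%N -> entry x i j = entry y i j.
  by move=> ltiN ltjN; have := eq_mat (Ordinal ltiN) (Ordinal ltjN); rewrite !mxE.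
apply: LK_ext => // [|i|i|i j]; first by apply: (entryE 0%N 0%N).
- case: (ltnP i N) => [ltiN|Ni]; first exact: (entryE i.+1 0%N ltiN).
  by case: (bx i 0%N Ni) (b_y i 0%N Ni) => -> _ _ _ [-> _ _ _].
- case: (ltnP i N) => [ltiN|Ni]; first exact: (entryE 0%N i.+1 _ ltiN).
  by case: (bx i 0%N Ni) (b_y i 0%N Ni) => _ -> _ _ [_ -> _ _].
- case: (ltnP i N) => [ltiN|Ni]; last first.
    by case: (bx i j Ni) (b_y i j Ni) => _ _ -> _ [_ _ -> _].
  case: (ltnP j N) => [ltjN|Nj]; last first.
    by case: (bx j i Nj) (b_y j i Nj) => _ _ _ -> [_ _ _ ->].
  apply: (addIr ((i == j)%:R * cv x)); rewrite [in RHS]eq_v.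
  exact: (entryE i.+1 j.+1).
Qed.

Definition Lone : LK K :=
  @MkLK K 1 1 (fun _ => 0) (fun _ => 0) (fun _ _ => 0) (zero_fin K).

Lemma Ladd_fin x y : exists N, forall i j, (N <= i)%N ->
  [/\ ce x i + ce y i = 0, cs x i + cs y i = 0,
      cm x i j + cm y i j = 0 & cm x j i + cm y j i = 0].
Proof.
have [N [bx b_y _]] := bounded_exists3 x y y.
by exists N => i j Ni; case: (bx i j Ni) (b_y i j Ni) => -> -> -> -> [-> -> -> ->];
  rewrite !addr0.
Qed.

Definition Ladd x y : LK K :=
  @MkLK K (cv x + cv y) (cw x + cw y) (fun i => ce x i + ce y i)
    (fun i => cs x i + cs y i) (fun i j => cm x i j + cm y i j) (Ladd_fin x y).

Lemma bounded_add N x y : bounded N x -> bounded N y -> bounded N (Ladd x y).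
Proof.
move=> bx b_y i j Ni.
by case: (bx i j Ni) (b_y i j Ni) => /= -> -> -> -> [-> -> -> ->]; rewrite !addr0.
Qed.

Lemma mat_add N x y : mat N (Ladd x y) = mat N x + mat N y.
Proof.
apply/matrixP => -[[|i] ?] [[|j] ?]; rewrite !mxE //=.
by set d := ((i == j)%:R : K); ring.
Qed.

Lemma mat_one N : mat N Lone = 1%:M.
Proof. by apply/matrixP => -[[|i] ?] [[|j] ?]; rewrite !mxE //= add0r mulr1. Qed.

Lemma mat_zero N : mat N (Lzero K) = 0.
Proof. by apply/matrixP => -[[|i] ?] [[|j] ?]; rewrite !mxE //= mulr0 addr0. Qed.

Lemma bounded_zero N : bounded N (Lzero K).
Proof. by []. Qed.

Lemma bounded_one N : bounded N Lone.
Proof. by []. Qed.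

Lemma LmulA x y z : Lmul x (Lmul y z) = Lmul (Lmul x y) z.
Proof.
have [N [bx b_y bz]] := bounded_exists3 x y z.
have [bxy byz] := (bounded_mul bx b_y, bounded_mul b_y bz).
apply: (mat_inj (bounded_mul bx byz) (bounded_mul bxy bz)); first exact: mulrA.
by rewrite !mat_mul // mulmxA.
Qed.

Lemma LmulDl x y z : Lmul (Ladd x y) z = Ladd (Lmul x z) (Lmul y z).
Proof.
have [N [bx b_y bz]] := bounded_exists3 x y z.
have [bxz byz] := (bounded_mul bx bz, bounded_mul b_y bz).
apply: (mat_inj (bounded_mul (bounded_add bx b_y) bz) (bounded_add bxz byz)).
  exact: mulrDl.
by rewrite (mat_mul (bounded_add bx b_y) bz) !mat_add !mat_mul // mulmxDl.
Qed.

Lemma Lmul1l x : Lmul Lone x = x.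
Proof.
have [N bx] := bounded_exists x.
apply: (mat_inj (bounded_mul _ bx) bx) => //; first exact: mul1r.
by rewrite mat_mul // mat_one mul1mx.
Qed.

Lemma Lmul0l x : Lmul (Lzero K) x = Lzero K.
Proof.
have [N bx] := bounded_exists x.
apply: (mat_inj (bounded_mul _ bx)) => //; first exact: mul0r.
by rewrite mat_mul // mat_zero mul0mx.
Qed.

Lemma Lmulr0 x : Lmul x (Lzero K) = Lzero K.
Proof.
have [N bx] := bounded_exists x.
apply: (mat_inj (bounded_mul bx _)) => //; first exact: mulr0.
by rewrite mat_mul // mat_zero mulmx0.
Qed.

Lemma Laddr0 x : Ladd x (Lzero K) = x.
Proof. by apply: LK_ext => [||i|i|i j] /=; rewrite addr0. Qed.

Lemma rann_is_complement x p t :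
  Lmul x p = Lzero K -> Ladd p (Lmul t x) = Lone -> rann_is (eq^~ x) p.
Proof.
move=> xp0 ptx1 y; split.
- move=> /(_ x erefl) xy0; exists y.
  by rewrite -[LHS]Lmul1l -ptx1 LmulDl -LmulA xy0 Lmulr0 Laddr0.
- by case=> z -> s ->; rewrite LmulA xp0 Lmul0l.
Qed.

Definition nat_entry N (A : 'M[K]_N.+1) (i j : nat) : K :=
  if (i < N.+1)%N && (j < N.+1)%N then A (inord i) (inord j) else 0.

Lemma nat_entry_bounded N (A : 'M[K]_N.+1) (a : K) i j : (N <= i)%N ->
  [/\ nat_entry A i.+1 0 = 0, nat_entry A 0 i.+1 = 0,
      nat_entry A i.+1 j.+1 - ((i == j) && (i < N)%N)%:R * a = 0 &
      nat_entry A j.+1 i.+1 - ((j == i) && (j < N)%N)%:R * a = 0].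
Proof.
rewrite /nat_entry !ltnS => Ni; rewrite ltnNge Ni /= !andbF /= mulr0n mul0r subr0.
by split => //; case: eqP => [->|]; rewrite ?ltnNge ?Ni ?andbF mul0r subr0.
Qed.

(* Subtracting a on the diagonal cancels the v-contribution added by [entry];
   it is only done below N so that the support stays finite. *)
Definition emb N (a : K) (A : 'M[K]_N.+1) : LK K :=
  @MkLK K a (nat_entry A 0 0) (fun i => nat_entry A i.+1 0)
    (fun i => nat_entry A 0 i.+1)
    (fun i j => nat_entry A i.+1 j.+1 - ((i == j) && (i < N)%N)%:R * a)
    (ex_intro _ N (fun i j => @nat_entry_bounded N A a i j)).

Lemma bounded_emb N a (A : 'M[K]_N.+1) : bounded N (emb a A).
Proof. exact: nat_entry_bounded. Qed.

Lemma mat_emb N a (A : 'M[K]_N.+1) : mat N (emb a A) = A.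
Proof.
apply/matrixP => -[[|i] ltiN] [[|j] ltjN]; rewrite !mxE /= /nat_entry ltiN ?ltjN /=;
  last rewrite (ltiN : (i < N)%N) andbT subrK.
all: by f_equal; apply: val_inj; rewrite /= inordK.
Qed.

Variable conj : {rmorphism K -> K}.

Lemma bounded_star N x : bounded N x -> bounded N (Lstar conj x).
Proof.
by move=> bx i j Ni; case: (bx i j Ni) => /= -> -> -> ->; rewrite rmorph0.
Qed.

Lemma mat_star N x : mat N (Lstar conj x) = adj conj (mat N x).
Proof.
apply/matrixP => -[[|i] ?] [[|j] ?]; rewrite !mxE //=.
by rewrite rmorphD rmorphM rmorph_nat eq_sym.
Qed.

End Truncation.

Lemma Rickart_star_LK (K : fieldType) (conj : {rmorphism K -> K}) :
  involutive conj -> positive_definite conj -> Rickart_star conj.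
Proof.
move=> conjK conj_pd x; have [N bx] := bounded_exists x.
have [P [T [PP adjP xP0 PTx1]]] := kernel_projection conjK conj_pd (mat N x).
set a := cv x; set c : K := (a == 0)%:R.
have [ac0 cc c_inv] : [/\ a * c = 0, c * c = c & c + a^-1 * a = 1].
  rewrite /c; case: (eqVneq a 0) => [->|a0] /=; rewrite ?mulr1n ?mulr0n.
    by rewrite mul0r mul1r mulr0 addr0.
  by rewrite mulr0 mul0r mulVf ?add0r.
pose p := emb c P; pose t := emb a^-1 T.
have [bp bt] : bounded N p /\ bounded N t by split; apply: bounded_emb.
exists p; split.
- apply: (mat_inj (bounded_mul bp bp) bp) => //.
  by rewrite mat_mul // mat_emb.
- apply: (mat_inj (bounded_star conj bp) bp); first exact: rmorph_nat.
  by rewrite mat_star mat_emb.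
apply: (@rann_is_complement _ x p t).
- apply: (mat_inj (bounded_mul bx bp) (@bounded_zero _ N)) => //.
  by rewrite mat_mul // mat_emb xP0 mat_zero.
apply: (mat_inj (bounded_add bp (bounded_mul bt bx)) (@bounded_one _ N)) => //.
by rewrite mat_add mat_mul // !mat_emb PTx1 mat_one.
Qed.

Section EvenStars.
Variable K : fieldType.
Implicit Types (x y z e s : LK K).

Lemma estar_fin (k : nat) : exists N, forall i j : nat, (N <= i)%N ->
  [/\ 0 = 0 :> K, (i == k)%:R = 0 :> K, 0 = 0 :> K & 0 = 0 :> K].
Proof. by exists k.+1 => i j /gtn_eqF ->. Qed.

Definition estar (k : nat) : LK K :=
  @MkLK K 0 0 (fun _ => 0) (fun i => (i == k)%:R) (fun _ _ => 0) (estar_fin k).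

Lemma eproj_fin (k : nat) : exists N, forall i j : nat, (N <= i)%N ->
  [/\ 0 = 0 :> K, 0 = 0 :> K, ((i == k) && (j == k))%:R = 0 :> K
    & ((j == k) && (i == k))%:R = 0 :> K].
Proof. by exists k.+1 => i j /gtn_eqF ->; rewrite andbF. Qed.

Definition eproj (k : nat) : LK K :=
  @MkLK K 0 0 (fun _ => 0) (fun _ => 0) (fun i j => ((i == k) && (j == k))%:R)
    (eproj_fin k).

Lemma fsum_delta k (f : nat -> K) : fsum (fun j => (j == k)%:R * f j) = f k.
Proof.
rewrite (@fsumE _ _ k.+1) => [|j /gtn_eqF ->]; last by rewrite mul0r.
rewrite big_ord_recr /= eqxx mul1r big1 ?add0r // => j _.
by rewrite ltn_eqF ?mul0r.
Qed.

Lemma cs_mul_estar k y : cs (Lmul (estar k) y) k = cv y + cm y k k.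
Proof. by rewrite /= /muls /= mul0r add0r eqxx mul1r fsum_delta. Qed.

Lemma mul_estar_eproj n k : n != k -> Lmul (estar n) (eproj k) = Lzero K.
Proof.
move=> /negbTE nk; apply: LK_ext => /= [||i|i|i j].
- exact: mul0r.
- by rewrite /mulw mul0r add0r fsum0 // => j; rewrite mulr0.
- by rewrite /mule !mul0r !add0r fsum0.
- rewrite /muls !mul0r mulr0 !add0r fsum0 // => j.
  by rewrite /=; case: (eqVneq j n) => [->|_]; rewrite ?nk ?mulr0 ?mul0r.
- by rewrite /mulm !mul0r !add0r fsum0 // => l; rewrite mul0r.
Qed.

Lemma cm_mul_bounded N x y k : bounded N x -> (N <= k)%N ->
  cm (Lmul x y) k k = cv x * cm y k k.
Proof.
move=> bx Nk; rewrite /= /mulm fsum0 => [|j]; last first.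
  by case: (bx k j Nk) => _ _ -> _; rewrite mul0r.
by case: (bx k k Nk) => -> _ -> _; rewrite !mul0r !addr0.
Qed.

Definition even_stars (s : LK K) : Prop := exists n, s = estar n.*2.

Lemma even_stars_homogeneous s : even_stars s -> homogeneous s.
Proof. by case=> n ->; exists (-1) => -[| |m|m|m l] //=; rewrite ?eqxx. Qed.

Lemma rann_even_stars_not_principal e : Lmul e e = e -> ~ rann_is even_stars e.
Proof.
move=> ee rann_e; have [N be] := bounded_exists e.
have N_le_2N : (N <= N.*2)%N by rewrite -addnn leq_addr.
have e_ann : forall s, even_stars s -> Lmul s e = Lzero K.
  by apply/(rann_e e); exists e; rewrite ee.
have cv_e0 : cv e = 0.
  have /(congr1 (fun u => cs u N.*2)) := e_ann _ (ex_intro _ N erefl).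
  by rewrite cs_mul_estar; case: (be _ N.*2 N_le_2N) => _ _ -> _; rewrite addr0.
have [z ez] : exists z, eproj N.*2.+1 = Lmul e z.
  apply/rann_e => s [n ->]; apply: mul_estar_eproj.
  by apply/eqP => /(congr1 odd); rewrite /= !odd_double.
have /(congr1 (fun u => cm u N.*2.+1 N.*2.+1)) := ez.
rewrite (cm_mul_bounded _ be) ?leqW // cv_e0 mul0r /= eqxx.
by move/eqP; rewrite oner_eq0.
Qed.

End EvenStars.

Theorem mainTheorem17 (K : fieldType) (conj : {rmorphism K -> K}) :
  involutive conj -> positive_definite conj ->
  [/\ Rickart_star conj, ~ Baer K & ~ graded_Baer K].
Proof.
move=> conjK conj_pd; split; first exact: Rickart_star_LK.
- case/(_ (@even_stars K)) => e [ee].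
  exact: rann_even_stars_not_principal.
- case/(_ (@even_stars K) (@even_stars_homogeneous K)) => e [_ ee].
  exact: rann_even_stars_not_principal.
Qed.
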